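(* Let $R$ be a $*$-reducing ring and let $p,q\in R$ be projections. Then the following conditions are equivalent: (1) $1-pq$ is MP invertible; (2) $1-pqp$ is MP invertible; (3) $p-pqp$ is MP invertible; (4) $p-pq$ is MP invertible; (5) $p-qp$ is MP invertible; (6) $1-qp$ is MP invertible; (7) $1-qpq$ is MP invertible; (8) $q-qpq$ is MP invertible; (9) $q-qp$ is MP invertible; (10) $q-pq$ is MP invertible. Moreover, when any one of these conditions holds, $(p-pqp)^{\dagger}=(1-pq)^{\dagger}p$.
   Context: $R$ is an associative ring with identity $1$ and an involution $a\mapsto a^*$ (satisfying $(a^* )^*=a$, $(a+b)^*=a^*+b^*$, $(ab)^*=b^*a^*$). $R$ is $*$-reducing if $a^*a=0$ implies $a=0$ for all $a\in R$. An element $a$ is MP invertible if there is $b$ with $aba=a$, $bab=b$, $(ab)^*=ab$, $(ba)^*=ba$; this $b$ is unique and written $a^{\dagger}$. A projection is an element $p$ with $p^2=p=p^*$. *)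

From mathcomp Require Import all_boot all_order all_algebra.
Set Implicit Arguments. Unset Strict Implicit. Unset Printing Implicit Defensive.
Import GRing.Theory.
Local Open Scope ring_scope.

Definition involution (R : pzRingType) (star : R -> R) : Prop :=
  [/\ forall a, star (star a) = a,
      forall a b, star (a + b) = star a + star b
    & forall a b, star (a * b) = star b * star a].

Definition star_reducing (R : pzRingType) (star : R -> R) : Prop :=
  forall a, star a * a = 0 -> a = 0.

Definition is_MP_inverse (R : pzRingType) (star : R -> R) (a b : R) : Prop :=
  [/\ a * b * a = a, b * a * b = b, star (a * b) = a * b & star (b * a) = b * a].

Definition MP_invertible (R : pzRingType) (star : R -> R) (a : R) : Prop :=
  exists b, is_MP_inverse star a b.

Definition projection (R : pzRingType) (star : R -> R) (p : R) : Prop :=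
  p * p = p /\ star p = p.

From mathcomp Require Import all_boot all_order all_algebra.
Import GRing.Theory.
Local Open Scope ring_scope.
Set Implicit Arguments. Unset Strict Implicit.

(* Everything reduces to the self-adjoint element a = p - pqp, which equals
   (p - qp)^* (p - qp). In a *-reducing ring x is MP invertible iff x^* x is,
   which handles p - qp and its adjoint p - pq; and 1 - pqp is the orthogonal
   sum of the projection 1 - p and a. For 1 - pq, *-reducedness shows that
   1 - pq and 1 - qp have the same right annihilator (pqz = z forces qz = z),
   so 1 - pq commutes with its MP inverse b, and cutting down to the corner p
   shows that bp is the MP inverse of (1 - pq)p = a. Conversely, from the MP
   inverse c of a one writes down an element inverting 1 - pq modulo the
   projection p - ca onto the meet of p and q. The remaining conditions are
   the same ones with p and q exchanged, linked by the involution. *)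

Section StarRing.
Variables (R : pzRingType) (s : R -> R).
Hypothesis hinv : involution s.

Lemma starK x : s (s x) = x. Proof. by case: hinv. Qed.
Lemma starD x y : s (x + y) = s x + s y. Proof. by case: hinv. Qed.
Lemma starM x y : s (x * y) = s y * s x. Proof. by case: hinv. Qed.

Lemma star0 : s 0 = 0.
Proof. by apply: (addrI (s 0)); rewrite -starD !addr0. Qed.

Lemma starN x : s (- x) = - s x.
Proof. by apply: (addrI (s x)); rewrite -starD !subrr star0. Qed.

Lemma starB x y : s (x - y) = s x - s y.
Proof. by rewrite starD starN. Qed.

Lemma star1 : s 1 = 1.
Proof. by rewrite -[LHS]mulr1 -{2}[1]starK -starM mulr1 starK. Qed.

Lemma MP_inverse_uniq y b1 b2 :
  is_MP_inverse s y b1 -> is_MP_inverse s y b2 -> b1 = b2.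
Proof.
case=> h1 h2 h3 h4 [k1 k2 k3 k4].
have sy_r : s y = s y * y * b2 by rewrite -{1}k1 starM k3 mulrA.
have sy_l : s y = b1 * y * s y by rewrite -{1}h1 -mulrA starM h4.
have -> : b1 = b1 * y * b2.
  rewrite -{1}h2 -mulrA -h3 starM sy_r !mulrA -(mulrA b1 (s b1)) -starM h3.
  by rewrite !mulrA h2.
rewrite -{2}k2 -k4 starM sy_l -(mulrA (b1 * y) (s y)) -starM k4.
by rewrite -!mulrA (mulrA b2) k2 !mulrA.
Qed.

Lemma MP_inverse_star y b : is_MP_inverse s y b -> is_MP_inverse s (s y) (s b).
Proof.
by case=> h1 h2 h3 h4; split; rewrite -!starM ?starK ?mulrA ?h1 ?h2 ?h3 ?h4.
Qed.

Lemma MP_invertible_star y : MP_invertible s (s y) <-> MP_invertible s y.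
Proof.
split=> -[b /MP_inverse_star hb]; last by exists (s b).
by exists (s b); rewrite starK in hb.
Qed.

Lemma MP_inverse_selfadj y b : s y = y -> is_MP_inverse s y b -> s b = b.
Proof.
move=> sy hb; apply: (MP_inverse_uniq _ hb).
by rewrite -{1}sy; exact: MP_inverse_star.
Qed.

Lemma MP_inverse_annr y c e : is_MP_inverse s y c -> s e * y = 0 -> c * e = 0.
Proof.
case=> _ h2 h3 _ ey.
have ye : s y * e = 0 by rewrite -[e]starK -starM ey star0.
by rewrite -h2 -(mulrA c y c) -h3 starM -!mulrA ye !mulr0.
Qed.

Lemma MP_inverse_annl y c e : is_MP_inverse s y c -> y * s e = 0 -> e * c = 0.
Proof.
case=> _ h2 _ h4 ye.
have ey : e * s y = 0 by rewrite -[e]starK -starM ye star0.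
by rewrite -h2 mulrA -h4 starM mulrA ey !mul0r.
Qed.

Lemma MP_inverse_adjM y b :
  is_MP_inverse s y b -> is_MP_inverse s (s y * y) (b * s b).
Proof.
case=> h1 h2 h3 h4.
have sy_sb : s y * s b = b * y by rewrite -starM h4.
have sy_fix : b * y * s y = s y by rewrite -sy_sb -!starM mulrA h1.
have adjM_inv : s y * y * (b * s b) = b * y.
  by rewrite -mulrA (mulrA y b) -h3 starM !mulrA sy_sb sy_fix sy_sb.
have inv_adjM : b * s b * (s y * y) = b * y.
  by rewrite -mulrA (mulrA (s b)) -starM h3 !mulrA h2.
by split; rewrite ?adjM_inv ?inv_adjM ?h4 // mulrA ?sy_fix ?h2.
Qed.

Lemma MP_inverse_commute y b : is_MP_inverse s y b ->
  (forall z, y * z = 0 -> s y * z = 0) -> (forall z, s y * z = 0 -> y * z = 0) ->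
  y * b = b * y.
Proof.
case=> h1 h2 h3 h4 ker_l ker_r.
have yb_by : y * b = y * b * (b * y).
  have /ker_l : y * (1 - b * y) = 0 by rewrite mulrBr mulr1 mulrA h1 subrr.
  rewrite mulrBr mulr1 => /subr0_eq sy.
  by rewrite -h3 starM {1}sy mulrA.
have by_yb : b * y = b * y * (y * b).
  have /ker_r : s y * (1 - y * b) = 0 by rewrite mulrBr mulr1 -h3 -starM h1 subrr.
  rewrite mulrBr mulr1 => /subr0_eq yy.
  by rewrite {1}yy mulrA.
by rewrite -h3 yb_by starM h4 h3 -by_yb.
Qed.

Lemma MP_inverse_commute_selfadj y b : s y = y -> is_MP_inverse s y b ->
  y * b = b * y.
Proof. by move=> sy hb; apply: (MP_inverse_commute hb) => z; rewrite sy. Qed.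

Lemma MP_inverse_add_proj e x c : projection s e ->
  e * x = 0 -> x * e = 0 -> is_MP_inverse s x c -> is_MP_inverse s (e + x) (e + c).
Proof.
case=> ee se ex xe hc; case: (hc) => h1 h2 h3 h4.
have ce : c * e = 0 by apply: MP_inverse_annr hc _; rewrite se.
have ec : e * c = 0 by apply: MP_inverse_annl hc _; rewrite se.
have ex_ec : (e + x) * (e + c) = e + x * c.
  by rewrite mulrDl !mulrDr ee ec xe addr0 add0r.
have ec_ex : (e + c) * (e + x) = e + c * x.
  by rewrite mulrDl !mulrDr ee ex ce addr0 add0r.
split.
- by rewrite ex_ec mulrDl !mulrDr ee ex -(mulrA x c e) ce mulr0 h1 addr0 add0r.
- by rewrite ec_ex mulrDl !mulrDr ee ec -(mulrA c x e) xe mulr0 h2 addr0 add0r.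
- by rewrite ex_ec starD se h3.
- by rewrite ec_ex starD se h4.
Qed.

Lemma MP_inverse_of_mul_1B y v k : y * v = 1 - k -> v * y = 1 - k ->
  s k = k -> k * y = 0 -> k * v = 0 -> is_MP_inverse s y v.
Proof.
move=> yv vy sk ky kv.
by split; rewrite ?yv ?vy ?starB ?star1 ?sk // mulrBl mul1r ?ky ?kv subr0.
Qed.

Lemma MP_inverse_corner e y b : projection s e -> is_MP_inverse s y b ->
  y * b = b * y -> (1 - e) * y = 1 - e -> y * e = e * y * e ->
  is_MP_inverse s (y * e) (b * e).
Proof.
case=> ee se hb yb ey1 ye; case: (hb) => h1 h2 h3 h4.
have eby : (1 - e) * (b * y) = 1 - e.
  by rewrite -{1}ey1 -mulrA (mulrA y b y) h1 ey1.
have e1b : (1 - e) * b = 1 - e by rewrite -{1}ey1 -mulrA yb eby.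
have eb : e * b = b - (1 - e) by rewrite -e1b mulrBl mul1r subKr.
have ebe : e * b * e = b * e by rewrite eb mulrBl mulrBl mul1r ee subrr subr0.
have bye : b * y * (1 - e) = 1 - e.
  by have := congr1 s eby; rewrite starM h4 starB star1 se.
have sbye : s (b * y * e) = b * y * e.
  have -> : b * y * e = b * y - (1 - e) by rewrite -{1}bye mulrBr mulr1 subKr.
  by rewrite starB h4 starB star1 se.
have yebe : y * e * (b * e) = b * y * e.
  by rewrite -mulrA (mulrA e b e) ebe mulrA yb.
have beye : b * e * (y * e) = b * y * e.
  by rewrite -mulrA (mulrA e y e) -ye mulrA.
split.
- by rewrite yebe -mulrA (mulrA e y e) -ye mulrA -yb h1.
- by rewrite beye -mulrA (mulrA e b e) ebe mulrA h2.
- by rewrite yebe sbye.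
- by rewrite beye sbye.
Qed.

Hypothesis hred : star_reducing s.

Lemma MP_inverse_of_adjM y d :
  is_MP_inverse s (s y * y) d -> is_MP_inverse s y (d * s y).
Proof.
move=> hd; have sd : s d = d by apply: (MP_inverse_selfadj _ hd); rewrite starM starK.
case: hd => h1 h2 _ h4; rewrite !mulrA in h1 h2.
pose z := y * d * (s y * y) - y.
have syz : s y * z = 0 by rewrite /z mulrBr !mulrA h1 subrr.
have sz : s z = (s y * y * d - 1) * s y.
  by rewrite /z starB !starM starK sd !mulrA mulrBl mul1r.
have /hred/subr0_eq yfix : s z * z = 0 by rewrite sz -mulrA syz mulr0.
rewrite !mulrA in yfix.
split.
- by rewrite mulrA yfix.
- by rewrite !mulrA h2.
- by rewrite !starM starK sd !mulrA.
- by rewrite -mulrA h4.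
Qed.

Lemma MP_invertible_adjM y : MP_invertible s (s y * y) <-> MP_invertible s y.
Proof.
split=> -[b hb]; last by exists (b * s b); exact: MP_inverse_adjM.
by exists (b * s y); exact: MP_inverse_of_adjM.
Qed.

Lemma proj_fixed_of_fixM p q z : projection s p -> projection s q ->
  p * z = z -> p * q * z = z -> q * z = z.
Proof.
case=> pp sp [qq sq] pz pqz.
have szp : s z * p = s z by rewrite -{2}pz starM sp.
have q1q : (1 - q) * (1 - q) = 1 - q.
  by rewrite mulrBr mulr1 mulrBl mul1r qq subrr subr0.
have szz : s z * z = s z * q * z by rewrite -{2}pqz !mulrA szp.
have /hred : s ((1 - q) * z) * ((1 - q) * z) = 0.
  rewrite starM starB star1 sq mulrA -(mulrA (s z)) q1q mulrBr mulr1 mulrBl.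
  by rewrite szz subrr.
by rewrite mulrBl mul1r => /subr0_eq/esym.
Qed.

Lemma ker_1_pq p q z : projection s p -> projection s q ->
  (1 - p * q) * z = 0 -> (1 - q * p) * z = 0.
Proof.
move=> hp hq; rewrite mulrBl mul1r => /subr0_eq zpq.
have pz : p * z = z by rewrite zpq !mulrA (proj1 hp).
have qz := proj_fixed_of_fixM hp hq pz (esym zpq).
by rewrite mulrBl mul1r -mulrA pz qz subrr.
Qed.

Lemma MP_inverse_1_pq_commute p q b : projection s p -> projection s q ->
  is_MP_inverse s (1 - p * q) b -> (1 - p * q) * b = b * (1 - p * q).
Proof.
move=> hp hq hb; have s_1pq : s (1 - p * q) = 1 - q * p.
  by rewrite starB star1 starM (proj2 hp) (proj2 hq).
by apply: (MP_inverse_commute hb) => z; rewrite s_1pq; exact: ker_1_pq.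
Qed.

Section Projections.
Variables p q : R.
Hypotheses (hp : projection s p) (hq : projection s q).

Let pp : p * p = p. Proof. by case: hp. Qed.
Let sp : s p = p. Proof. by case: hp. Qed.
Let qq : q * q = q. Proof. by case: hq. Qed.
Let sq : s q = q. Proof. by case: hq. Qed.

Let a := p - p * q * p.

Let sa : s a = a. Proof. by rewrite /a starB sp !starM sp sq mulrA. Qed.
Let pa : p * a = a. Proof. by rewrite /a mulrBr pp !mulrA pp. Qed.
Let ap : a * p = a. Proof. by rewrite /a mulrBl pp -(mulrA _ p p) pp. Qed.
Let p1p : (1 - p) * p = 0. Proof. by rewrite mulrBl mul1r pp subrr. Qed.
Let s1p : s (1 - p) = 1 - p. Proof. by rewrite starB star1 sp. Qed.
Let hp1 : projection s (1 - p).
Proof. by split; [rewrite mulrBr mulr1 p1p subr0 | exact: s1p]. Qed.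
Let p1a : (1 - p) * a = 0. Proof. by rewrite mulrBl mul1r pa subrr. Qed.
Let a1p : a * (1 - p) = 0. Proof. by rewrite mulrBr mulr1 ap subrr. Qed.

Lemma MP_inverse_pqp_of_1_pq b :
  is_MP_inverse s (1 - p * q) b -> is_MP_inverse s a (b * p).
Proof.
move=> hb; have up : (1 - p * q) * p = a by rewrite mulrBl mul1r.
rewrite -up; apply: (MP_inverse_corner hp hb).
- exact: MP_inverse_1_pq_commute hp hq hb.
- by rewrite mulrBr mulr1 mulrBl mul1r mulrA pp subrr subr0.
- by rewrite up mulrBr mulr1 mulrBl pp !mulrA pp.
Qed.

Lemma MP_inverse_pqp_of_1_pqp b :
  is_MP_inverse s (1 - p * q * p) b -> is_MP_inverse s a (b * p).
Proof.
move=> hb; have wp : (1 - p * q * p) * p = a.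
  by rewrite mulrBl mul1r -(mulrA _ p p) pp.
rewrite -wp; apply: (MP_inverse_corner hp hb).
- by apply: MP_inverse_commute_selfadj hb; rewrite starB star1 !starM sp sq mulrA.
- by rewrite mulrBr mulr1 !mulrA p1p !mul0r subr0.
- by rewrite wp mulrBr mulr1 mulrBl pp !mulrA pp -(mulrA _ p p) pp.
Qed.

Lemma MP_inverse_1_pqp_of_pqp c :
  is_MP_inverse s a c -> is_MP_inverse s (1 - p * q * p) ((1 - p) + c).
Proof.
have -> : 1 - p * q * p = (1 - p) + a by rewrite /a addrA subrK.
exact: MP_inverse_add_proj hp1 p1a a1p.
Qed.

Section PQPInverse.
Variable c : R.
Hypothesis hc : is_MP_inverse s a c.

Let aca : a * c * a = a. Proof. by case: hc. Qed.
Let cac : c * a * c = c. Proof. by case: hc. Qed.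
Let sca : s (c * a) = c * a. Proof. by case: hc. Qed.
Let ac_ca : a * c = c * a. Proof. exact: MP_inverse_commute_selfadj sa hc. Qed.
Let cp : c * p = c.
Proof.
have : c * (1 - p) = 0 by apply: (MP_inverse_annr hc); rewrite s1p p1a.
by rewrite mulrBr mulr1 => /subr0_eq/esym.
Qed.
Let pc : p * c = c.
Proof.
have : (1 - p) * c = 0 by apply: (MP_inverse_annl hc); rewrite s1p a1p.
by rewrite mulrBl mul1r => /subr0_eq/esym.
Qed.

(* [K] is the projection onto the meet of [p] and [q]. *)
Let K := p - c * a.

Let sK : s K = K. Proof. by rewrite /K starB sp sca. Qed.
Let pK : p * K = K. Proof. by rewrite /K mulrBr pp mulrA pc. Qed.
Let Kp : K * p = K. Proof. by rewrite /K mulrBl pp -mulrA ap. Qed.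
Let qK : q * K = K.
Proof.
apply: (proj_fixed_of_fixM hp hq pK).
have : a * K = 0 by rewrite /K mulrBr ap mulrA aca subrr.
by rewrite {1}/a mulrBl pK -(mulrA (p * q) p K) pK => /subr0_eq/esym.
Qed.
Let Kq : K * q = K. Proof. by have := congr1 s qK; rewrite starM sK sq. Qed.
Let K1 : 1 - K = 1 - p + c * a. Proof. by rewrite /K opprB addrA addrAC. Qed.

Let v := (1 - p) + c * (1 + q * (1 - p)).

Let Ku : K * (1 - p * q) = 0. Proof. by rewrite mulrBr mulr1 mulrA Kp Kq subrr. Qed.
Let Kv : K * v = 0.
Proof.
have K1p : K * (1 - p) = 0 by rewrite mulrBr mulr1 Kp subrr.
have Kc : K * c = 0 by rewrite /K mulrBl pc cac subrr.
by rewrite /v mulrDr K1p mulrA Kc !mul0r add0r.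
Qed.

Let uv : (1 - p * q) * v = 1 - K.
Proof.
have uc : (1 - p * q) * c = a * c.
  by rewrite /a !mulrBl mul1r pc -(mulrA (p * q) p c) pc.
have pq1p : p * q * (1 - p) = a * c * q * (1 - p).
  have : K * q * (1 - p) = 0 by rewrite Kq mulrBr mulr1 Kp subrr.
  by rewrite /K mulrBl mulrBl ac_ca => /subr0_eq.
rewrite /v mulrDr mulrA uc (mulrDr (a * c)) mulr1 mulrBl mul1r pq1p !mulrA.
by rewrite [a * c + _]addrC addrA subrK K1 ac_ca.
Qed.

Let vu : v * (1 - p * q) = 1 - K.
Proof.
have pu : (1 - p) * (1 - p * q) = 1 - p by rewrite mulrBr mulr1 mulrA p1p mul0r subr0.
have cqp : c * q * p = c - c * a.
  by rewrite -{1}cp -(mulrA c p q) -(mulrA c (p * q) p) -{1}[p * q * p](subKr p) mulrBr cp.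
rewrite /v mulrDl pu -mulrA mulrDl mul1r -mulrA pu mulrDr.
rewrite mulrBr mulr1 mulrA cp (mulrA c q) mulrBr mulr1 cqp.
by rewrite (addrA (c - c * q)) subrK subKr K1.
Qed.

Lemma MP_inverse_1_pq_of_pqp :
  is_MP_inverse s (1 - p * q) ((1 - p) + c * (1 + q * (1 - p))).
Proof. exact: MP_inverse_of_mul_1B uv vu sK Ku Kv. Qed.
End PQPInverse.

Lemma MP_invertible_1_pq : MP_invertible s (1 - p * q) <-> MP_invertible s a.
Proof.
split=> -[b hb]; first by exists (b * p); exact: MP_inverse_pqp_of_1_pq.
by eexists; exact: MP_inverse_1_pq_of_pqp hb.
Qed.

Lemma MP_invertible_1_pqp : MP_invertible s (1 - p * q * p) <-> MP_invertible s a.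
Proof.
split=> -[b hb]; first by exists (b * p); exact: MP_inverse_pqp_of_1_pqp.
by eexists; exact: MP_inverse_1_pqp_of_pqp hb.
Qed.

Lemma MP_invertible_p_qp : MP_invertible s (p - q * p) <-> MP_invertible s a.
Proof.
have <- : s (p - q * p) * (p - q * p) = a.
  rewrite starB starM sp sq mulrBl !mulrBr pp !mulrA -(mulrA p q q) qq.
  by rewrite subrr subr0.
by apply: iff_sym; exact: MP_invertible_adjM.
Qed.

Lemma MP_invertible_p_pq : MP_invertible s (p - p * q) <-> MP_invertible s a.
Proof.
have <- : s (p - q * p) = p - p * q by rewrite starB starM sp sq.
exact: iff_trans (MP_invertible_star _) MP_invertible_p_qp.
Qed.

Lemma MP_invertible_1_qp : MP_invertible s (1 - q * p) <-> MP_invertible s (1 - p * q).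
Proof.
have <- : s (1 - p * q) = 1 - q * p by rewrite starB star1 starM sp sq.
exact: MP_invertible_star.
Qed.

End Projections.
End StarRing.

Theorem corollary2p5 (R : pzRingType) (star : R -> R)
  (hinv : involution star) (hred : star_reducing star) (p q : R)
  (hp : projection star p) (hq : projection star q) :
  [<-> MP_invertible star (1 - p * q);
       MP_invertible star (1 - p * q * p);
       MP_invertible star (p - p * q * p);
       MP_invertible star (p - p * q);
       MP_invertible star (p - q * p);
       MP_invertible star (1 - q * p);
       MP_invertible star (1 - q * p * q);
       MP_invertible star (q - q * p * q);
       MP_invertible star (q - q * p);
       MP_invertible star (q - p * q)]
  /\ (forall b, is_MP_inverse star (1 - p * q) b ->
        is_MP_inverse star (p - p * q * p) (b * p)).
Proof.
split; last by move=> b; exact: MP_inverse_pqp_of_1_pq.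
have pq1 := MP_invertible_1_pq hinv hred hp hq.
have pq2 := MP_invertible_1_pqp hinv hp hq.
have pq4 := MP_invertible_p_pq hinv hred hp hq.
have pq5 := MP_invertible_p_qp hinv hred hp hq.
have qp1 := MP_invertible_1_pq hinv hred hq hp.
have qp2 := MP_invertible_1_pqp hinv hq hp.
have qp4 := MP_invertible_p_pq hinv hred hq hp.
have qp5 := MP_invertible_p_qp hinv hred hq hp.
have swap := MP_invertible_1_qp hinv hp hq.
tfae.
- by move/pq1/pq2.
- by move/pq2.
- by move/pq4.
- by move/pq4/pq5.
- by move/pq5/pq1/swap.
- by move/qp1/qp2.
- by move/qp2.
- by move/qp4.
- by move/qp4/qp5.
- by move/qp5/qp1/swap.
Qed.
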